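(* Let $r$ be a prime power and let $f\in\mathbb{F}_r[t_1,t_2]$ be a non-constant polynomial of degree at most $2$. Then the map $\mathbb{F}_r^2\to\mathbb{F}_r$ induced by $f$ takes at least $\lceil r/2\rceil$ distinct values. *)

From HB Require Import structures.
From mathcomp Require Import all_boot all_algebra.
From mathcomp Require Export mpoly.
Set Implicit Arguments. Unset Strict Implicit. Unset Printing Implicit Defensive.
Import GRing.Theory.
Local Open Scope ring_scope.

(* Total degree of a multivariate polynomial: msize p = 1 + total degree for
   p != 0 and msize 0 = 0 (cf. size for univariate polynomials). *)
Definition mtotdeg (n : nat) (R : ringType) (p : {mpoly R[n]}) : nat :=
  (msize p).-1.

Definition mnonconst (n : nat) (R : ringType) (p : {mpoly R[n]}) : bool :=
  (1 < msize p)%N.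

Definition mvalues (n : nat) (F : finFieldType) (p : {mpoly F[n]}) : {set F} :=
  [set p.@[v] | v : {ffun 'I_n -> F}].

From mathcomp Require Import all_boot all_algebra.
From mathcomp Require Import mpoly.
From mathcomp Require Import zify ring.
Set Implicit Arguments. Unset Strict Implicit. Unset Printing Implicit Defensive.
Import GRing.Theory.
Local Open Scope ring_scope.

(* Restrict f to a line t |-> t d through the origin: this gives a univariate
   polynomial A t^2 + B t + C, and d can be chosen among (1,0), (0,1), (1,1)
   so that A or B is nonzero.  A nonconstant univariate polynomial of degree at
   most 2 takes each value at most twice, so it takes at least |F|/2 values. *)

Lemma card_le_mul_imset (T U : finType) (g : T -> U) (k : nat) :
  (forall y, #|[pred x | g x == y]| <= k)%N ->
  (#|T| <= k * #|[set g x | x : T]|)%N.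
Proof.
move=> fiber_le; rewrite -[X in (X <= _)%N]sum1_card (partition_big_imset g).
rewrite mulnC -sum_nat_const; apply: leq_sum => y _.
by rewrite sum1_card; apply: leq_trans (fiber_le y); apply/subset_leq_card/subsetP.
Qed.

Section FiniteDomainPolynomials.

Variable R : finIdomainType.
Implicit Types p : {poly R}.

Lemma card_roots_lt p : p != 0 -> (#|[pred x | root p x]| < size p)%N.
Proof.
move=> p0; rewrite cardE; apply: max_poly_roots => //; last exact: enum_uniq.
by apply/allP => x; rewrite mem_enum.
Qed.

Lemma card_horner_fiber p y :
  (1 < size p)%N -> (#|[pred x | p.[x] == y]| <= (size p).-1)%N.
Proof.
move=> p_gt1.
have size_py : size (p - y%:P) = size p.
  by rewrite size_polyDl // size_polyN (leq_ltn_trans (size_polyC_leq1 y)).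
have py0 : p - y%:P != 0 by rewrite -size_poly_eq0 size_py -lt0n ltnW.
rewrite -ltnS prednK ?(ltnW p_gt1) // -size_py.
apply: leq_ltn_trans (card_roots_lt py0); apply: subset_leq_card.
by apply/subsetP => x; rewrite !inE rootE !hornerE subr_eq0.
Qed.

Lemma card_horner_values p :
  (1 < size p)%N -> (#|R| <= (size p).-1 * #|[set p.[x] | x : R]|)%N.
Proof. by move=> p_gt1; apply: card_le_mul_imset => y; apply: card_horner_fiber. Qed.

Lemma card_quadratic_values (A B C : R) :
  (A != 0) || (B != 0) ->
  ((#|R| + 1) %/ 2 <= #|[set (A * t ^+ 2 + B * t + C)%R | t : R]|)%N.
Proof.
move=> AB0; pose p := \poly_(i < 3) [:: C; B; A]`_i.
have p_le3 : (size p <= 3)%N by apply: size_poly.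
have p_gt1 : (1 < size p)%N.
  have coef_size i : p`_i != 0 -> (i < size p)%N.
    by apply: contraR; rewrite -leqNgt => /(nth_default 0) ->.
  case/orP: AB0 => [A0|B0]; [apply: ltnW (coef_size 2%N _)|apply: coef_size];
    by rewrite coef_poly.
have horner_p t : p.[t] = A * t ^+ 2 + B * t + C.
  by rewrite horner_poly !big_ord_recl big_ord0 /= /bump /=; ring.
have : (#|R| <= 2 * #|[set (A * t ^+ 2 + B * t + C)%R | t : R]|)%N.
  rewrite -(eq_imset _ horner_p); apply: leq_trans (card_horner_values p_gt1) _.
  by rewrite leq_mul2r -ltnS (ltn_predK p_gt1) p_le3 orbT.
lia.
Qed.

End FiniteDomainPolynomials.

Lemma exists_direction_nonzero (R : comNzRingType) (a20 a11 a02 a10 a01 : R) :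
  [|| a20 != 0, a11 != 0, a02 != 0, a10 != 0 | a01 != 0] ->
  exists d0 d1 : R,
    (a20 * d0 ^+ 2 + a11 * d0 * d1 + a02 * d1 ^+ 2 != 0) || (a10 * d0 + a01 * d1 != 0).
Proof.
move=> a_nz.
have [a_x|] := boolP ((a20 != 0) || (a10 != 0)).
  by exists 1, 0; rewrite !(expr1n, expr0n, mulr1, mulr0, addr0).
have [a_y|] := boolP ((a02 != 0) || (a01 != 0)).
  by exists 0, 1; rewrite !(expr1n, expr0n, mulr1, mul0r, mulr0, add0r, addr0).
rewrite !negb_or !negbK => /andP[/eqP a02_0 /eqP a01_0] /andP[/eqP a20_0 /eqP a10_0].
move: a_nz; rewrite a20_0 a02_0 a10_0 a01_0 eqxx /= orbF => a11_nz.
by exists 1, 1; rewrite !(expr1n, mulr1, mul0r, add0r, addr0) a11_nz.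
Qed.

Section BivariateDegreeTwo.

Variable R : comNzRingType.
Implicit Types f : {mpoly R[2]}.

Definition mnm2 (a b : nat) : 'X_{1..2} := [multinom [tuple a; b]].

Lemma mnm2E (m : 'X_{1..2}) : m = mnm2 (m ord0) (m ord_max).
Proof.
apply/mnmP => -[[|[|//]] i_lt2].
  by rewrite (_ : Ordinal i_lt2 = ord0) //; apply: val_inj.
by rewrite (_ : Ordinal i_lt2 = ord_max) //; apply: val_inj.
Qed.

Lemma mdeg_mnm2 a b : mdeg (mnm2 a b) = (a + b)%N.
Proof. by rewrite mdegE big_ord_recl big_ord1. Qed.

Definition mnms2_nonconst : seq 'X_{1..2} :=
  [:: mnm2 2 0; mnm2 1 1; mnm2 0 2; mnm2 1 0; mnm2 0 1].

Definition mnms2_le2 : seq 'X_{1..2} := mnm2 0 0 :: mnms2_nonconst.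

Lemma mem_mnms2_le2 m : (mdeg m <= 2)%N -> m \in mnms2_le2.
Proof.
rewrite [m]mnm2E mdeg_mnm2.
by case: (m ord0) => [|[|[|a]]]; case: (m ord_max) => [|[|[|b]]].
Qed.

Lemma mem_mnms2_nonconst m : (0 < mdeg m <= 2)%N -> m \in mnms2_nonconst.
Proof.
case/andP=> m_gt0 /mem_mnms2_le2; rewrite inE => /predU1P[m0|//].
by rewrite m0 mdeg_mnm2 in m_gt0.
Qed.

Lemma meval_msize_le3 f (v : 'I_2 -> R) : (msize f <= 3)%N ->
  f.@[v] = \sum_(m <- mnms2_le2) f@_m * (v ord0 ^+ m ord0 * v ord_max ^+ m ord_max).
Proof.
move=> f_le3; rewrite mevalE.
under eq_bigr do rewrite big_ord_recl big_ord1.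
have -> : lift ord0 ord0 = ord_max :> 'I_2 by apply: val_inj.
rewrite [RHS](bigID (mem (msupp f))) /= [X in _ + X]big1 ?addr0 => [|m]; last first.
  by rewrite mcoeff_msupp negbK => /eqP->; rewrite mul0r.
rewrite -[RHS]big_filter; apply: perm_big; apply: uniq_perm; first exact: msupp_uniq.
  by rewrite filter_uniq.
move=> m; rewrite mem_filter; case: (boolP (m \in msupp f)) => //= m_supp.
by rewrite mem_mnms2_le2 // -ltnS (leq_trans (msize_mdeg_lt m_supp)).
Qed.

Definition quadratic_part f (d0 d1 : R) :=
  f@_(mnm2 2 0) * d0 ^+ 2 + f@_(mnm2 1 1) * d0 * d1 + f@_(mnm2 0 2) * d1 ^+ 2.

Definition linear_part f (d0 d1 : R) := f@_(mnm2 1 0) * d0 + f@_(mnm2 0 1) * d1.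

Lemma meval_line f (d0 d1 t : R) : (msize f <= 3)%N ->
  f.@[[ffun i => t * (if i == ord0 then d0 else d1)]] =
  quadratic_part f d0 d1 * t ^+ 2 + linear_part f d0 d1 * t + f@_(mnm2 0 0).
Proof.
move=> f_le3; rewrite meval_msize_le3 // !big_cons big_nil !ffunE /=.
by rewrite /quadratic_part /linear_part; ring.
Qed.

Lemma exists_line_nonconst f :
  has (fun m => f@_m != 0) mnms2_nonconst ->
  exists d0 d1, (quadratic_part f d0 d1 != 0) || (linear_part f d0 d1 != 0).
Proof. by rewrite /= orbF; apply: exists_direction_nonzero. Qed.

End BivariateDegreeTwo.

Theorem lemma5 (F : finFieldType) (f : {mpoly F[2]}) :
  mnonconst f -> (mtotdeg f <= 2)%N ->
  ((#|F| + 1) %/ 2 <= #|mvalues f|)%N.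
Proof.
rewrite /mnonconst /mtotdeg => f_gt1 f_le2.
have f_le3 : (msize f <= 3)%N by lia.
have f0 : f != 0 by apply: contraTneq f_gt1 => ->; rewrite msize0.
have lead_nonconst : has (fun m => f@_m != 0) mnms2_nonconst.
  apply/hasP; exists (mlead f); last by rewrite -mcoeff_msupp mlead_supp.
  by apply: mem_mnms2_nonconst; move: f_gt1 f_le2; rewrite -(mlead_deg f0); lia.
have [d0 [d1 line_nonconst]] := exists_line_nonconst lead_nonconst.
apply: leq_trans (card_quadratic_values (f@_(mnm2 0 0)) line_nonconst) _.
apply/subset_leq_card/subsetP => _ /imsetP[t _ ->].
by rewrite -meval_line //; apply: imset_f.
Qed.
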